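(* Let $\mathbb{F}$ be a field and $n\ge2$. Let $\mathcal{A}$ be a nonempty set of $(n-1)$-dimensional subspaces of $\mathbb{F}^n$ and $\mathcal{B}$ a nonempty set of $1$-dimensional subspaces of $\mathbb{F}^n$ such that $V_1\not\subseteq V_2$ for all $V_1\in\mathcal{B}$ and $V_2\in\mathcal{A}$. Then $S(\mathcal{A},\mathcal{B})=\{A\in M(n,\mathbb{F}) : \mathrm{Im}(A)\in\mathcal{A},\ \ker(A)\in\mathcal{B}\}$ is an isolated subsemigroup of $M(n,\mathbb{F})$.
   Context: $M(n,\mathbb{F})$ is the semigroup of $n\times n$ matrices over $\mathbb{F}$ under multiplication, identified with linear operators on $\mathbb{F}^n$. A subsemigroup $T$ of a semigroup $S$ is isolated if for all $x\in S$ and all positive integers $m$, $x^m\in T$ implies $x\in T$. *)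

From HB Require Import structures.
From mathcomp Require Import all_boot all_order all_algebra.
Set Implicit Arguments. Unset Strict Implicit. Unset Printing Implicit Defensive.
Import GRing.Theory.
Local Open Scope ring_scope.

(* An n x n matrix A is identified with the linear operator x |-> A *m x on
   column vectors F^n = 'cV[F]_n. Subspaces of F^n are {vspace 'cV[F]_n}. *)

Definition mx_op (F : fieldType) (n : nat) (A : 'M[F]_n) : 'End('cV[F]_n) :=
  linfun (mulmx A).

Definition mx_im (F : fieldType) (n : nat) (A : 'M[F]_n) : {vspace 'cV[F]_n} :=
  limg (mx_op A).

Definition mx_ker (F : fieldType) (n : nat) (A : 'M[F]_n) : {vspace 'cV[F]_n} :=
  lker (mx_op A).

Definition S_AB (F : fieldType) (n : nat)
  (SA SB : {vspace 'cV[F]_n} -> Prop) (A : 'M[F]_n) : Prop :=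
  SA (mx_im A) /\ SB (mx_ker A).

Definition subsemigroup (F : fieldType) (n : nat) (T : ('M[F]_n) -> Prop) : Prop :=
  (exists A, T A) /\ (forall A B, T A -> T B -> T (A *m B)).

Definition isolated (F : fieldType) (n : nat) (T : ('M[F]_n) -> Prop) : Prop :=
  forall (x : 'M[F]_n) (m : nat), (0 < m)%N -> T (x ^+ m) -> T x.

From HB Require Import structures.
From mathcomp Require Import all_boot all_order all_algebra.
From mathcomp Require Import zify.
Set Implicit Arguments. Unset Strict Implicit. Unset Printing Implicit Defensive.
Import GRing.Theory.
Local Open Scope ring_scope.

(* Isolation: if x^m lies in S(A,B) then Im(x^m) <= Im x and ker x <= ker(x^m).
   Since Im(x^m) is a proper subspace, x is not invertible, so Im x is a
   hyperplane too; rank-nullity then forces both inclusions to be equalities.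
   Closure under products: the line ker A meets the hyperplane Im B trivially,
   so A is injective on Im B and the same dimension count gives
   Im(AB) = Im A and ker(AB) = ker B. *)

Section DirectProjection.
Variables (K : fieldType) (vT : vectType K).
Implicit Types U V : {vspace vT}.

Lemma limg_daddv_pi U V : (U :&: V = 0)%VS -> limg (daddv_pi U V) = U.
Proof.
move=> dxUV; apply/vspaceP => u; apply/memv_imgP/idP => [[w _ ->] | Uu].
  exact: memv_pi.
by exists u; rewrite ?memvf ?daddv_pi_id.
Qed.

Lemma lker_daddv_pi U V :
  (U :&: V = 0)%VS -> (U + V = fullv)%VS -> lker (daddv_pi U V) = V.
Proof.
move=> dxUV sumUV; have dxVU : (V :&: U = 0)%VS by rewrite capvC.
apply/vspaceP => w; rewrite memv_ker.
have := daddv_pi_add (w := w) dxUV; rewrite sumUV memvf => /(_ isT) decw.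
apply/eqP/idP => [piw0 | Vw]; first by rewrite -decw piw0 add0r memv_pi.
by move: decw; rewrite (daddv_pi_id dxVU Vw) -{3}[w]add0r => /addIr.
Qed.

Lemma capv_line_eq0 L V : \dim L = 1%N -> ~~ (L <= V)%VS -> (L :&: V = 0)%VS.
Proof.
move=> dimL LnV; apply/eqP; rewrite -dimv_eq0; apply: contraNT LnV => capL.
have /eqP <- : (L :&: V)%VS == L by rewrite eqEdim capvSl dimL lt0n.
exact: capvSr.
Qed.

End DirectProjection.

Section MatrixOperator.
Variables (F : fieldType) (n : nat).
Implicit Types A B : 'M[F]_n.

Lemma dimv_cV : \dim (fullv : {vspace 'cV[F]_n}) = n.
Proof. by rewrite dimvf dim_matrix (mulr1 (n : nat)). Qed.

Lemma mx_op_surj (f : 'End('cV[F]_n)) : exists A, mx_op A = f.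
Proof.
exists (\matrix_(i, j) f (delta_mx j 0) i 0); apply/lfunP => x; rewrite lfunE /=.
rewrite [in RHS](matrix_sum_delta x) linear_sum; apply/matrixP => i k.
rewrite (ord1 k) !mxE summxE; apply: eq_bigr => j _.
by rewrite big_ord1 linearZ !mxE (ord1 (_ : 'I_1)) mulrC.
Qed.

Lemma mx_opM A B : mx_op (A *m B) = (mx_op A \o mx_op B)%VF.
Proof. by apply/lfunP => x; rewrite comp_lfunE !lfunE /= mulmxA. Qed.

Lemma mx_imM A B : mx_im (A *m B) = (mx_op A @: mx_im B)%VS.
Proof. by rewrite /mx_im mx_opM limg_comp. Qed.

Lemma mx_imMl A B : (mx_im (A *m B) <= mx_im A)%VS.
Proof. by rewrite mx_imM limgS ?subvf. Qed.

Lemma mx_kerMr A B : (mx_ker B <= mx_ker (A *m B))%VS.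
Proof.
apply/subvP => x; rewrite !memv_ker mx_opM comp_lfunE => /eqP ->.
by rewrite linear0.
Qed.

Lemma mx_rank_nullity A : (\dim (mx_ker A) + \dim (mx_im A))%N = n.
Proof. by have := limg_ker_dim (mx_op A) fullv; rewrite capfv dimv_cV. Qed.

Lemma mx_ker_eq A B :
  (mx_ker A <= mx_ker B)%VS -> (\dim (mx_im A) <= \dim (mx_im B))%N ->
  mx_ker A = mx_ker B.
Proof.
move=> sAB leAB; apply/eqP; rewrite eqEdim sAB /=.
by have := mx_rank_nullity A; have := mx_rank_nullity B; lia.
Qed.

Lemma mx_im1 : mx_im (1 : 'M[F]_n) = fullv.
Proof.
apply/vspaceP => v; rewrite memvf; apply/memv_imgP.
by exists v; rewrite ?memvf // lfunE /= mul1mx.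
Qed.

Lemma mx_im_exp_full A k : mx_im A = fullv -> mx_im (A ^+ k) = fullv.
Proof.
move=> imA; elim: k => [|k IHk]; first exact: mx_im1.
by rewrite exprS -mulmxE mx_imM IHk.
Qed.

Lemma mx_im_complement (V L : {vspace 'cV[F]_n}) :
  (V :&: L = 0)%VS -> (V + L = fullv)%VS -> exists A, mx_im A = V /\ mx_ker A = L.
Proof.
move=> dxVL sumVL; have [A opA] := mx_op_surj (daddv_pi V L).
by exists A; rewrite /mx_im /mx_ker opA limg_daddv_pi ?lker_daddv_pi.
Qed.

End MatrixOperator.

Section HyperplaneLineSemigroup.
Variables (F : fieldType) (n : nat) (SA SB : {vspace 'cV[F]_n} -> Prop).
Hypothesis n_gt0 : (0 < n)%N.
Hypothesis dim_SA : forall V, SA V -> \dim V = n.-1.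
Hypothesis dim_SB : forall V, SB V -> \dim V = 1%N.
Hypothesis SB_notin_SA : forall V1 V2, SB V1 -> SA V2 -> ~~ (V1 <= V2)%VS.

Lemma S_AB_exists : (exists V, SA V) -> (exists V, SB V) -> exists A, S_AB SA SB A.
Proof.
move=> [V SAV] [L SBL].
have dxLV := capv_line_eq0 (dim_SB SBL) (SB_notin_SA SBL SAV).
have dxVL : (V :&: L = 0)%VS by rewrite capvC.
have sumVL : (V + L = fullv)%VS.
  apply/eqP; rewrite eqEdim subvf dimv_cV /=.
  by have := dimv_sum_cap V L; rewrite dxVL dimv0 (dim_SA SAV) (dim_SB SBL); lia.
by have [A [imA kerA]] := mx_im_complement dxVL sumVL; exists A; rewrite /S_AB imA kerA.
Qed.

Lemma S_AB_mul A B : S_AB SA SB A -> S_AB SA SB B -> S_AB SA SB (A *m B).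
Proof.
move=> [SAimA SBkerA] [SAimB SBkerB].
have dxKI := capv_line_eq0 (dim_SB SBkerA) (SB_notin_SA SBkerA SAimB).
have dimAB : \dim (mx_im (A *m B)) = \dim (mx_im B).
  by rewrite mx_imM limg_dim_eq // capvC.
have imAB : mx_im (A *m B) = mx_im A.
  by apply/eqP; rewrite eqEdim mx_imMl dimAB (dim_SA SAimA) (dim_SA SAimB) leqnn.
have kerAB : mx_ker B = mx_ker (A *m B) by rewrite (mx_ker_eq (mx_kerMr A B)) ?dimAB.
by rewrite /S_AB imAB -kerAB.
Qed.

Lemma S_AB_isolated : isolated (S_AB SA SB).
Proof.
move=> x [|m] // _ [SAimX SBkerX].
have imS : (mx_im (x ^+ m.+1) <= mx_im x)%VS by rewrite exprS -mulmxE mx_imMl.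
have not_full : mx_im x != fullv.
  apply/eqP => /(mx_im_exp_full m.+1) full.
  by move: (dim_SA SAimX); rewrite full dimv_cV; lia.
have dimX : (\dim (mx_im x) <= n.-1)%N.
  by move: not_full; rewrite eqEdim subvf dimv_cV /= -ltnNge; lia.
have imX : mx_im (x ^+ m.+1) = mx_im x.
  by apply/eqP; rewrite eqEdim imS (dim_SA SAimX).
have kerX : mx_ker x = mx_ker (x ^+ m.+1).
  by apply: mx_ker_eq; rewrite ?imX // exprSr -mulmxE mx_kerMr.
by rewrite /S_AB -imX kerX.
Qed.

End HyperplaneLineSemigroup.

Theorem lemma26 (F : fieldType) (n : nat) (hn : (2 <= n)%N)
  (SA SB : {vspace 'cV[F]_n} -> Prop)
  (hA : forall V, SA V -> \dim V = n.-1)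
  (hB : forall V, SB V -> \dim V = 1%N)
  (hAne : exists V, SA V) (hBne : exists V, SB V)
  (hAB : forall V1 V2, SB V1 -> SA V2 -> ~~ (V1 <= V2)%VS) :
  subsemigroup (S_AB SA SB) /\ isolated (S_AB SA SB).
Proof.
have n_gt0 : (0 < n)%N by apply: leq_trans hn.
split; first split.
- exact: S_AB_exists.
- exact: S_AB_mul.
- exact: S_AB_isolated.
Qed.
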